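(* Let $\varphi:\Omega\to\mathbb R$ be a summable potential. Then (1) $\hat\sigma$ is of bounded access if and only if condition (A) holds; (2) $\hat\sigma$ is of finite range if and only if condition (B) holds.
   Context: $(X,\mathcal F,m)$ is a complete probability space, $\theta:X\to X$ an invertible measurable $m$-preserving map, $E=\mathbb N$, and $x\mapsto A(x)=(A_{ij}(x))_{i,j\in E}$ a measurable map into $\{0,1\}$-matrices. $E_x^\infty$ is the set of $\omega\in E^{\mathbb N}$ with $A_{\omega_i\omega_{i+1}}(\theta^i(x))=1$ for all $i\ge0$; $[e]_x=\{\omega\in E_x^\infty:\omega_0=e\}$, $[0,\dots,l]_x=\{\omega\in E_x^\infty:\omega_0\le l\}$, complements taken in $E_x^\infty$. $d(\omega,\tau)=e^{-\min\{n:\omega_n\ne\tau_n\}}$. $\sigma_x$ is the shift $E_x^\infty\to E_{\theta(x)}^\infty$, $\Omega=\bigcup_x\{x\}\times E_x^\infty$, $\hat\sigma(x,\omega)=(\theta(x),\sigma_x\omega)$, assumed topologically mixing (for all $a,b\in E$ there is $N$ such that for $n\ge N$ and all $x$ there is a word $\omega$ of length $n+1$ with $a\omega b$ admissible at $x$). Finite range: for every $e\in E$ there is a finite $D_e\subset E$ with $\{j:A_{ej}(x)=1\}\subset D_e$ for $m$-a.e. $x$. Bounded access: for every $b\in E$ there is $b^*\in E$ such that for $m$-a.e. $x$ there is $a\le b^*$ with $A_{ab}(x)=1$. Fix $\alpha>0$, $v_\alpha(g)=\sup\{|g(\tau)-g(\omega)|/d(\tau,\omega)^\alpha:\tau\ne\omega,\tau_0=\omega_0\}$.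 A summable potential is a measurable $\varphi:\Omega\to\mathbb R$ with $\varphi_x=\varphi(x,\cdot)$ continuous, $\operatorname{ess\,sup}_xv_\alpha(\varphi_x)<\infty$, such that for every $e\in E$ there are $0<c_e<C_e<\infty$ with $c_e\le e^{\varphi_x}\le C_e$ on $[e]_x$ for a.e. $x$, and $\lim_{l\to\infty}\operatorname{ess\,sup}_x\sup\mathcal L_x(1_{[0,\dots,l]_x^c})=0$, where $\mathcal L_xg(\omega)=\sum_{e\in E:\,A_{e\omega_0}(x)=1}g(e\omega)e^{\varphi_x(e\omega)}$ for $\omega\in E_{\theta(x)}^\infty$. Condition (A): for every $e\in E$ there is $M_e\in(0,\infty)$ with $M_e^{-1}\le\mathcal L_x1$ on $[e]_{\theta(x)}$ for a.e. $x$. Condition (B): $\lim_{e\to\infty}\operatorname{ess\,sup}_x\sup_{[e]_{\theta(x)}}\mathcal L_x1=0$. *)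

From Stdlib Require Import Reals List Classical.
Open Scope R_scope.

Definition sigma_algebra {X : Type} (M : (X -> Prop) -> Prop) : Prop :=
  M (fun _ => True) /\
  (forall A, M A -> M (fun x => ~ A x)) /\
  (forall F : nat -> X -> Prop, (forall n, M (F n)) -> M (fun x => exists n, F n x)).

Definition probability_measure {X : Type} (M : (X -> Prop) -> Prop)
  (m : (X -> Prop) -> R) : Prop :=
  sigma_algebra M /\
  m (fun _ => True) = 1 /\
  (forall A, M A -> 0 <= m A) /\
  (forall F : nat -> X -> Prop,
      (forall n, M (F n)) ->
      (forall i j x, i <> j -> F i x -> F j x -> False) ->
      infinite_sum (fun n => m (F n)) (m (fun x => exists n, F n x))).

Definition complete_measure {X : Type} (M : (X -> Prop) -> Prop)
  (m : (X -> Prop) -> R) : Prop :=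
  forall A B, M B -> m B = 0 -> (forall x, A x -> B x) -> M A.

Definition ae {X : Type} (M : (X -> Prop) -> Prop) (m : (X -> Prop) -> R)
  (P : X -> Prop) : Prop :=
  exists N, M N /\ m N = 0 /\ forall x, ~ N x -> P x.

Definition invertible_mpt {X : Type} (M : (X -> Prop) -> Prop)
  (m : (X -> Prop) -> R) (theta : X -> X) : Prop :=
  exists theta_inv : X -> X,
    (forall x, theta_inv (theta x) = x) /\ (forall x, theta (theta_inv x) = x) /\
    (forall A, M A -> M (fun x => A (theta x))) /\
    (forall A, M A -> M (fun x => A (theta_inv x))) /\
    (forall A, M A -> m (fun x => A (theta x)) = m A).

Definition generated {T : Type} (G : (T -> Prop) -> Prop) (S : T -> Prop) : Prop :=
  forall Sig, sigma_algebra Sig -> (forall B, G B -> Sig B) -> Sig S.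

(* product sigma-algebra on X x E^N (E = nat, E^N with the product topology,
   generated by measurable rectangles B x cylinder) *)
Definition prod_rectangle {X : Type} (M : (X -> Prop) -> Prop)
  (S : X * (nat -> nat) -> Prop) : Prop :=
  exists (B : X -> Prop) (c : list nat), M B /\
    forall p, S p <-> (B (fst p) /\ forall i, (i < length c)%nat -> snd p i = nth i c 0%nat).

Definition prod_measurable {X : Type} (M : (X -> Prop) -> Prop) :=
  generated (@prod_rectangle X M).

Definition iter_th {X : Type} (theta : X -> X) (i : nat) (x : X) : X :=
  Nat.iter i theta x.

Definition admissible {X : Type} (theta : X -> X) (A : X -> nat -> nat -> bool)
  (x : X) (w : nat -> nat) : Prop :=
  forall i, A (iter_th theta i x) (w i) (w (S i)) = true.

Definition cons_seq (e : nat) (w : nat -> nat) : nat -> nat :=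
  fun n => match n with O => e | S k => w k end.

Definition top_mixing {X : Type} (theta : X -> X) (A : X -> nat -> nat -> bool) : Prop :=
  forall a b : nat, exists N : nat, forall n : nat, (N <= n)%nat -> forall x : X,
    (* the word a w_0 ... w_n b, written as u with u 0 = a, u (n+2) = b *)
    exists u : nat -> nat, u O = a /\ u (S (S n)) = b /\
      forall i, (i < S (S n))%nat -> A (iter_th theta i x) (u i) (u (S i)) = true.

Definition finite_range {X : Type} (M : (X -> Prop) -> Prop) (m : (X -> Prop) -> R)
  (A : X -> nat -> nat -> bool) : Prop :=
  forall e : nat, exists D : list nat,
    ae M m (fun x => forall j, A x e j = true -> In j D).

Definition bounded_access {X : Type} (M : (X -> Prop) -> Prop) (m : (X -> Prop) -> R)
  (A : X -> nat -> nat -> bool) : Prop :=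
  forall b : nat, exists bstar : nat,
    ae M m (fun x => exists a, (a <= bstar)%nat /\ A x a b = true).

Fixpoint L_partial {X : Type} (A : X -> nat -> nat -> bool)
  (phi : X -> (nat -> nat) -> R) (x : X) (g : (nat -> nat) -> R)
  (w : nat -> nat) (N : nat) : R :=
  match N with
  | O => 0
  | S k => L_partial A phi x g w k +
           (if A x k (w O) then g (cons_seq k w) * exp (phi x (cons_seq k w)) else 0)
  end.

(* L_x g (w) <= c   (the series has nonnegative terms for g >= 0;
   its value in [0, +oo] is the sup of its partial sums) *)
Definition L_le {X : Type} A (phi : X -> (nat -> nat) -> R) x g w (c : R) : Prop :=
  forall N, L_partial A phi x g w N <= c.

Definition L_ge {X : Type} A (phi : X -> (nat -> nat) -> R) x g w (c : R) : Prop :=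
  forall c', c' < c -> exists N, c' <= L_partial A phi x g w N.

Definition one_fun : (nat -> nat) -> R := fun _ => 1.

Definition ind_tail (l : nat) : (nat -> nat) -> R :=
  fun w => if Nat.leb (w O) l then 0 else 1.

Definition summable_potential {X : Type} (M : (X -> Prop) -> Prop)
  (m : (X -> Prop) -> R) (theta : X -> X) (A : X -> nat -> nat -> bool)
  (alpha : R) (phi : X -> (nat -> nat) -> R) : Prop :=
  (* measurability of phi on Omega (trace of the product sigma-algebra) *)
  (forall c : R, exists S, prod_measurable M S /\
     forall x w, admissible theta A x w -> (S (x, w) <-> phi x w < c)) /\
  (forall x w, admissible theta A x w -> forall eps, eps > 0 ->
     exists n, forall t, admissible theta A x t ->
       (forall k, (k <= n)%nat -> t k = w k) -> Rabs (phi x t - phi x w) < eps) /\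
  (* ess sup_x v_alpha(phi_x) < oo ; d(t,w)^alpha = exp(-alpha n), n = first
     index where t and w differ *)
  (exists C : R, ae M m (fun x =>
     forall t w n, admissible theta A x t -> admissible theta A x w ->
       t O = w O -> (forall k, (k < n)%nat -> t k = w k) -> t n <> w n ->
       Rabs (phi x t - phi x w) <= C * exp (- alpha * INR n))) /\
  (forall e : nat, exists ce Ce : R, 0 < ce /\ ce < Ce /\
     ae M m (fun x => forall w, admissible theta A x w -> w O = e ->
       ce <= exp (phi x w) <= Ce)) /\
  (forall eps, eps > 0 -> exists l0 : nat, forall l, (l0 <= l)%nat ->
     ae M m (fun x => forall w, admissible theta A (theta x) w ->
       L_le A phi x (ind_tail l) w eps)).

Definition condition_A {X : Type} (M : (X -> Prop) -> Prop)
  (m : (X -> Prop) -> R) (theta : X -> X) (A : X -> nat -> nat -> bool)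
  (phi : X -> (nat -> nat) -> R) : Prop :=
  forall e : nat, exists Me : R, 0 < Me /\
    ae M m (fun x => forall w, admissible theta A (theta x) w -> w O = e ->
      L_ge A phi x one_fun w (/ Me)).

Definition condition_B {X : Type} (M : (X -> Prop) -> Prop)
  (m : (X -> Prop) -> R) (theta : X -> X) (A : X -> nat -> nat -> bool)
  (phi : X -> (nat -> nat) -> R) : Prop :=
  forall eps, eps > 0 -> exists e0 : nat, forall e, (e0 <= e)%nat ->
    ae M m (fun x => forall w, admissible theta A (theta x) w -> w O = e ->
      L_le A phi x one_fun w eps).

(* Both equivalences are statements about single summands of [L_x 1] on a cylinder
   [[b]_(theta x)].  A summand is the weight [exp phi] of an admissible predecessor [a]
   of [b], and [exp phi] is bounded below on [[a]_x] uniformly in [x]; if, on the other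
   hand, no predecessor of [b] is [<= l], then [L_x 1 = L_x 1_([0..l]^c)] there, which is
   uniformly small for large [l].  Bounded access (a predecessor [<= b*]) hence gives (A),
   and finite range (for [e] beyond all successors of [0..l] no predecessor is [<= l])
   gives (B).  The converses argue by contradiction, topological mixing supplying an
   admissible sequence that starts with any prescribed symbol. *)
From Pilot Require Import Defs.
From Stdlib Require Import Reals List Classical.
From Stdlib Require Import Lra Lia ClassicalEpsilon FunctionalExtensionality PropExtensionality.
Open Scope R_scope.

Lemma pred_ext {X : Type} (P Q : X -> Prop) : (forall x, P x <-> Q x) -> P = Q.
Proof.
  intros H; apply functional_extensionality; intro x; apply propositional_extensionality; auto.
Qed.

Lemma infinite_sum_const_eq0 (c l : R) : infinite_sum (fun _ => c) l -> c = 0.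
Proof.
  intros Hs. destruct (Req_dec c 0) as [|Hc]; auto. exfalso.
  assert (Heps : Rabs c / 2 > 0) by (pose proof (Rabs_pos_lt c Hc); lra).
  destruct (Hs _ Heps) as [N HN].
  pose proof (HN N (le_n N)) as H1. pose proof (HN (S N) (Nat.le_succ_diag_r N)) as H2.
  unfold R_dist in H1, H2. rewrite tech5 in H2.
  pose proof (Rabs_triang (sum_f_R0 (fun _ => c) N + c - l) (- (sum_f_R0 (fun _ => c) N - l))).
  rewrite Rabs_Ropp in *.
  replace (sum_f_R0 (fun _ => c) N + c - l + - (sum_f_R0 (fun _ => c) N - l)) with c in * by ring.
  lra.
Qed.

Lemma infinite_sum_eventually_const (f : nat -> R) (l s : R) (K : nat) :
  infinite_sum f l -> (forall n, (K <= n)%nat -> sum_f_R0 f n = s) -> l = s.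
Proof.
  intros Hs Hf. destruct (Req_dec l s) as [|Hne]; auto. exfalso.
  assert (Heps : Rabs (l - s) > 0) by (apply Rabs_pos_lt; lra).
  destruct (Hs _ Heps) as [N HN].
  specialize (HN (max N K) (Nat.le_max_l _ _)).
  rewrite Hf in HN by lia. unfold R_dist in HN. rewrite Rabs_minus_sym in HN. lra.
Qed.

Lemma exists_least (P : nat -> Prop) (n : nat) :
  P n -> exists k, P k /\ forall j, (j < k)%nat -> ~ P j.
Proof.
  induction n as [n IH] using (well_founded_induction Wf_nat.lt_wf). intros Pn.
  destruct (classic (exists j, (j < n)%nat /\ P j)) as [[j [Hj Pj]]|Hno].
  - exact (IH j Hj Pj).
  - exists n; split; auto. intros j Hj Pj; apply Hno; eauto.
Qed.

Lemma exists_lower_bound_upto (f : nat -> R) (n : nat) :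
  (forall a, 0 < f a) -> exists c, 0 < c /\ forall a, (a <= n)%nat -> c <= f a.
Proof.
  intros Hf. induction n as [|n [c [Hc Hle]]].
  - exists (f O). split; [apply Hf|]. intros a Ha. replace a with O by lia. lra.
  - exists (Rmin c (f (S n))). split; [apply Rmin_glb_lt; auto|].
    intros a Ha. destruct (Nat.eq_dec a (S n)) as [->|Hne]; [apply Rmin_r|].
    eapply Rle_trans; [apply Rmin_l|]. apply Hle; lia.
Qed.

Lemma exists_upper_bound_lists_upto (D : nat -> list nat) (n : nat) :
  exists K, forall a j, (a <= n)%nat -> In j (D a) -> (j <= K)%nat.
Proof.
  assert (Hmax : forall a j, In j (D a) -> (j <= list_max (D a))%nat).
  { intros a j Hj. assert (H := proj1 (list_max_le (D a) _) (le_n _)).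
    rewrite Forall_forall in H. auto. }
  induction n as [|n [K HK]].
  - exists (list_max (D O)). intros a j Ha Hj. replace a with O in Hj by lia. auto.
  - exists (Nat.max K (list_max (D (S n)))). intros a j Ha Hj.
    destruct (Nat.eq_dec a (S n)) as [->|Hne].
    + specialize (Hmax _ _ Hj). lia.
    + specialize (HK a j ltac:(lia) Hj). lia.
Qed.

Section ProbabilitySpace.

Variables (X : Type) (M : (X -> Prop) -> Prop) (m : (X -> Prop) -> R).
Hypothesis Hprob : probability_measure M m.
Hypothesis Hcompl : complete_measure M m.

Lemma measurable_empty : M (fun _ => False).
Proof.
  destruct Hprob as [[HT [HC _]] _].
  replace (fun _ : X => False) with (fun x : X => ~ True) by (apply pred_ext; tauto).
  apply HC, HT.
Qed.

Lemma measure_empty : m (fun _ => False) = 0.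
Proof.
  destruct Hprob as [_ [_ [_ Hadd]]].
  specialize (Hadd (fun _ _ => False) (fun _ => measurable_empty) (fun _ _ _ _ h _ => h)).
  replace (fun x : X => exists _ : nat, False) with (fun _ : X => False) in Hadd
    by (apply pred_ext; intros x; split; [tauto|intros [_ h]; exact h]).
  exact (infinite_sum_const_eq0 _ _ Hadd).
Qed.

Lemma measure_union2 (B C : X -> Prop) : M B -> M C -> (forall x, B x -> C x -> False) ->
  m (fun x => B x \/ C x) = m B + m C.
Proof.
  intros HB HC Hdisj. destruct Hprob as [_ [_ [_ Hadd]]].
  set (F := fun n => match n with O => B | 1%nat => C | _ => fun _ : X => False end).
  assert (HF : forall n, M (F n)) by (intros [|[|n]]; simpl; auto using measurable_empty).
  assert (HFdisj : forall i j x, i <> j -> F i x -> F j x -> False).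
  { intros [|[|i]] [|[|j]] x Hij Hi Hj; simpl in *; try tauto; eauto; lia. }
  specialize (Hadd F HF HFdisj).
  replace (fun x => exists n, F n x) with (fun x => B x \/ C x) in Hadd.
  - apply (infinite_sum_eventually_const _ _ _ 1 Hadd). intros n Hn.
    induction n as [|n IH]; [lia|]. destruct n; [reflexivity|].
    rewrite tech5, IH by lia. simpl. rewrite measure_empty. ring.
  - apply pred_ext; intros x; split.
    + intros [Hx|Hx]; [exists O|exists 1%nat]; exact Hx.
    + intros [[|[|n]] Hn]; simpl in Hn; tauto.
Qed.

Lemma measure_null_subset (B C : X -> Prop) :
  M C -> m C = 0 -> (forall x, B x -> C x) -> m B = 0.
Proof.
  intros HC HC0 Hsub.
  set (D := fun x => C x /\ ~ B x).
  assert (HB : M B) by (apply (Hcompl B C); auto).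
  assert (HD : M D) by (apply (Hcompl D C); auto; intros x [h _]; exact h).
  assert (HCD : C = fun x => B x \/ D x).
  { apply pred_ext; intros x; unfold D. split; [|firstorder].
    intros Hx. destruct (classic (B x)); auto. }
  rewrite HCD, measure_union2 in HC0 by (auto; unfold D; tauto).
  destruct Hprob as [_ [_ [Hpos _]]]. pose proof (Hpos B HB). pose proof (Hpos D HD). lra.
Qed.

Lemma null_union (N : nat -> X -> Prop) : (forall n, M (N n)) -> (forall n, m (N n) = 0) ->
  M (fun x => exists n, N n x) /\ m (fun x => exists n, N n x) = 0.
Proof.
  intros HM Hm0. destruct Hprob as [[_ [_ Hsig]] [_ [Hpos Hadd]]].
  split; [apply Hsig; exact HM|].
  (* disjointify: [F n] is the part of [N n] not covered by an earlier [N k] *)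
  set (F := fun n x => N n x /\ forall k, (k < n)%nat -> ~ N k x).
  assert (HFsub : forall n x, F n x -> N n x) by (intros n x [h _]; exact h).
  assert (HF : forall n, M (F n)) by (intros n; apply (Hcompl _ (N n)); auto).
  assert (HF0 : forall n, m (F n) = 0).
  { intros n. exact (measure_null_subset _ _ (HM n) (Hm0 n) (HFsub n)). }
  assert (HFdisj : forall i j x, i <> j -> F i x -> F j x -> False).
  { intros i j x Hij [Hi Hi'] [Hj Hj'].
    destruct (Nat.lt_total i j) as [h|[h|h]]; [exact (Hj' i h Hi)|lia|exact (Hi' j h Hj)]. }
  specialize (Hadd F HF HFdisj).
  replace (fun x => exists n, F n x) with (fun x => exists n, N n x) in Hadd.
  - apply (infinite_sum_eventually_const _ _ _ 0 Hadd). intros n _.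
    induction n; simpl; rewrite ?IHn, HF0; ring.
  - apply pred_ext; intros x; split.
    + intros [n Hn]. destruct (exists_least (fun k => N k x) n Hn) as [k Hk]. exists k; exact Hk.
    + intros [n Hn]; eauto.
Qed.

Lemma ae_impl (P Q : X -> Prop) : ae M m P -> (forall x, P x -> Q x) -> ae M m Q.
Proof. intros [N [HN [Hm HP]]] H. exists N; auto. Qed.

Lemma ae_always (P : X -> Prop) : (forall x, P x) -> ae M m P.
Proof. intros H. exists (fun _ => False). auto using measurable_empty, measure_empty. Qed.

Lemma ae_forall (P : nat -> X -> Prop) :
  (forall n, ae M m (P n)) -> ae M m (fun x => forall n, P n x).
Proof.
  intros H. destruct (choice _ H) as [N HN].
  destruct (null_union N) as [HM Hm]; try (intros n; apply (HN n)).
  exists (fun x => exists n, N n x). repeat split; auto.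
  intros x Hx n. apply (HN n). intro h; apply Hx; eauto.
Qed.

Lemma ae_and (P Q : X -> Prop) : ae M m P -> ae M m Q -> ae M m (fun x => P x /\ Q x).
Proof.
  intros HP HQ.
  apply (ae_impl _ _ (ae_forall (fun n => match n with O => P | _ => Q end)
                        ltac:(intros [|n]; auto))).
  intros x Hx; exact (conj (Hx O) (Hx 1%nat)).
Qed.

End ProbabilitySpace.

Arguments ae_impl {X M m} P Q.
Arguments ae_always {X M m} Hprob P.
Arguments ae_forall {X M m} Hprob Hcompl P.
Arguments ae_and {X M m} Hprob Hcompl P Q.

Section RandomShift.

Variables (X : Type) (theta : X -> X) (A : X -> nat -> nat -> bool).

Lemma admissible_cons (x : X) (w : nat -> nat) (a : nat) :
  admissible theta A (theta x) w -> A x a (w O) = true ->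
  admissible theta A x (Defs.cons_seq a w).
Proof.
  intros Hw Ha [|i]; [exact Ha|].
  pose proof (Hw i) as Hi. unfold iter_th in *. rewrite <- Nat.iter_succ_r in Hi. exact Hi.
Qed.

(* Concatenate, starting at [y], admissible loops [b -> b] of length [P] chosen by [f]
   at the successive points [theta^(P q) y]. *)
Lemma admissible_concat_loops (P b : nat) (f : X -> nat -> nat) (y : X) :
  (0 < P)%nat ->
  (forall z, f z O = b /\ f z P = b /\
     forall i, (i < P)%nat -> A (iter_th theta i z) (f z i) (f z (S i)) = true) ->
  admissible theta A y (fun i => f (iter_th theta (P * (i / P)) y) (i mod P))%nat.
Proof.
  intros HP Hf i.
  set (q := (i / P)%nat). set (r := (i mod P)%nat).
  assert (Hi : i = (P * q + r)%nat) by apply Nat.div_mod_eq.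
  assert (Hr : (r < P)%nat) by (apply Nat.mod_upper_bound; lia).
  set (z := iter_th theta (P * q)%nat y).
  assert (Hiter : iter_th theta i y = iter_th theta r z).
  { unfold z, iter_th. rewrite <- Nat.iter_add. f_equal. lia. }
  rewrite Hiter. destruct (Hf z) as [_ [HzP Hz]].
  destruct (Nat.eq_dec (S r) P) as [HrP|HrP].
  - assert (HSq : S q = (S i / P)%nat) by (apply (Nat.div_unique _ _ _ 0); lia).
    assert (HS0 : O = (S i mod P)%nat) by (apply (Nat.mod_unique _ _ (S q)); lia).
    rewrite <- HSq, <- HS0, (proj1 (Hf _)), <- HzP, <- HrP. apply Hz; lia.
  - assert (Hq : q = (S i / P)%nat) by (apply (Nat.div_unique _ _ _ (S r)); lia).
    assert (HSr : S r = (S i mod P)%nat) by (apply (Nat.mod_unique _ _ q); lia).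
    rewrite <- Hq, <- HSr. apply Hz; lia.
Qed.

Lemma mixing_admissible_from (y : X) (b : nat) :
  top_mixing theta A -> exists w, admissible theta A y w /\ w O = b.
Proof.
  intros Hmix. destruct (Hmix b b) as [N HN].
  destruct (choice (fun z u => u O = b /\ u (S (S N)) = b /\
      forall i, (i < S (S N))%nat -> A (iter_th theta i z) (u i) (u (S i)) = true))
    as [f Hf].
  { intros z. exact (HN N (le_n N) z). }
  eexists; split; [apply (admissible_concat_loops (S (S N)) b f y); auto; lia|].
  cbv beta. rewrite Nat.Div0.div_0_l, Nat.Div0.mod_0_l. apply Hf.
Qed.

End RandomShift.

Section TransferOperator.

Variables (X : Type) (A : X -> nat -> nat -> bool) (phi : X -> (nat -> nat) -> R).

Lemma L_partial_le_mono (x : X) (g : (nat -> nat) -> R) (w : nat -> nat) (n k : nat) :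
  (forall v, 0 <= g v) -> (n <= k)%nat ->
  L_partial A phi x g w n <= L_partial A phi x g w k.
Proof.
  intros Hg Hle. induction Hle as [|k Hle IH]; [lra|]. simpl.
  destruct (A x k (w O)); [|lra].
  pose proof (Hg (Defs.cons_seq k w)). pose proof (exp_pos (phi x (Defs.cons_seq k w))). nra.
Qed.

Lemma L_partial_ge_term (x : X) (g : (nat -> nat) -> R) (w : nat -> nat) (a : nat) :
  (forall v, 0 <= g v) -> A x a (w O) = true ->
  g (Defs.cons_seq a w) * exp (phi x (Defs.cons_seq a w)) <= L_partial A phi x g w (S a).
Proof.
  intros Hg Ha. simpl. rewrite Ha.
  pose proof (L_partial_le_mono x g w 0 a Hg (Nat.le_0_l a)). simpl in *. lra.
Qed.

Lemma L_partial_one_tail (x : X) (w : nat -> nat) (l N : nat) :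
  (forall a, (a <= l)%nat -> A x a (w O) = false) ->
  L_partial A phi x one_fun w N = L_partial A phi x (ind_tail l) w N.
Proof.
  intros Hno. induction N as [|N IH]; simpl; auto. rewrite IH. f_equal.
  unfold ind_tail, one_fun; simpl. destruct (Nat.leb_spec N l) as [HN|HN]; auto.
  rewrite Hno; auto.
Qed.

End TransferOperator.

Section Equivalences.

Variables (X : Type) (M : (X -> Prop) -> Prop) (m : (X -> Prop) -> R)
  (theta : X -> X) (A : X -> nat -> nat -> bool) (phi : X -> (nat -> nat) -> R).
Hypothesis Hprob : probability_measure M m.
Hypothesis Hcompl : complete_measure M m.

Definition exp_potential_bounded_below : Prop :=
  forall e : nat, exists c, 0 < c /\
    ae M m (fun x => forall w, admissible theta A x w -> w O = e -> c <= exp (phi x w)).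

Definition tail_sums_small : Prop :=
  forall eps, eps > 0 -> exists l : nat,
    ae M m (fun x => forall w, admissible theta A (theta x) w ->
      L_le A phi x (ind_tail l) w eps).

Lemma summable_potential_exp_bounded_below (alpha : R) :
  summable_potential M m theta A alpha phi -> exp_potential_bounded_below.
Proof.
  intros [_ [_ [_ [Hce _]]]] e. destruct (Hce e) as [ce [Ce [Hpos [_ Hae]]]].
  exists ce. split; auto. apply (ae_impl _ _ Hae). intros x Hx w Hw He. apply (Hx w Hw He).
Qed.

Lemma summable_potential_tail_sums_small (alpha : R) :
  summable_potential M m theta A alpha phi -> tail_sums_small.
Proof.
  intros [_ [_ [_ [_ Htail]]]] eps Heps. destruct (Htail eps Heps) as [l Hl].
  exists l. exact (Hl l (le_n l)).
Qed.

Let one_nonneg : forall v, 0 <= one_fun v.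
Proof. intros v; unfold one_fun; lra. Qed.

Lemma bounded_access_condition_A :
  exp_potential_bounded_below -> bounded_access M m A -> condition_A M m theta A phi.
Proof.
  intros Hbelow Hacc e. destruct (Hacc e) as [bstar Hae_acc].
  destruct (choice _ Hbelow) as [c Hc].
  destruct (exists_lower_bound_upto c bstar (fun a => proj1 (Hc a))) as [c0 [Hc0 Hc0le]].
  exists (/ c0). split; [apply Rinv_0_lt_compat; exact Hc0|].
  apply (ae_impl _ _ (ae_and Hprob Hcompl _ _ Hae_acc
           (ae_forall Hprob Hcompl _ (fun a => proj2 (Hc a))))).
  intros x [[a [Ha HA]] Hexp] w Hw He c' Hc'. rewrite Rinv_inv in Hc'.
  exists (S a). rewrite <- He in HA.
  pose proof (Hexp a (Defs.cons_seq a w) (admissible_cons _ _ _ _ _ _ Hw HA) eq_refl).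
  pose proof (L_partial_ge_term _ A phi x one_fun w a one_nonneg HA).
  pose proof (Hc0le a Ha). unfold one_fun in *. lra.
Qed.

Lemma condition_A_bounded_access :
  top_mixing theta A -> tail_sums_small -> condition_A M m theta A phi -> bounded_access M m A.
Proof.
  intros Hmix Htail HcA b. destruct (HcA b) as [Me [HMe Hae_A]].
  assert (Hinv : 0 < / Me) by (apply Rinv_0_lt_compat; exact HMe).
  destruct (Htail (/ Me / 3) ltac:(lra)) as [l Hl].
  exists l.
  apply (ae_impl _ _ (ae_and Hprob Hcompl _ _ Hae_A Hl)).
  intros x [HL Htl]. apply NNPP; intro Hno.
  destruct (mixing_admissible_from _ theta A (theta x) b Hmix) as [w [Hw He]].
  destruct (HL w Hw He (/ Me / 2) ltac:(lra)) as [N HN].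
  rewrite (L_partial_one_tail _ A phi x w l) in HN.
  - pose proof (Htl w Hw N). lra.
  - rewrite He. intros a Ha. destruct (A x a b) eqn:E; auto. exfalso; eauto.
Qed.

Lemma finite_range_condition_B :
  tail_sums_small -> finite_range M m A -> condition_B M m theta A phi.
Proof.
  intros Htail Hfin eps Heps. destruct (Htail eps Heps) as [l Hl].
  destruct (choice _ Hfin) as [D HD].
  destruct (exists_upper_bound_lists_upto D l) as [K HK].
  exists (S K). intros e He.
  apply (ae_impl _ _ (ae_and Hprob Hcompl _ _ Hl (ae_forall Hprob Hcompl _ HD))).
  intros x [Htl HDx] w Hw He0 N. rewrite (L_partial_one_tail _ A phi x w l); [apply Htl; exact Hw|].
  intros a Ha. destruct (A x a (w O)) eqn:E; auto. exfalso.
  pose proof (HK a (w O) Ha (HDx a (w O) E)). lia.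
Qed.

Lemma condition_B_finite_range :
  top_mixing theta A -> exp_potential_bounded_below -> condition_B M m theta A phi ->
  finite_range M m A.
Proof.
  intros Hmix Hbelow HB e. destruct (Hbelow e) as [c [Hc Hae_c]].
  destruct (HB (c / 2) ltac:(lra)) as [e0 He0].
  exists (seq 0 e0).
  assert (Hbig : forall j, ae M m (fun x => (e0 <= j)%nat -> forall w,
             admissible theta A (theta x) w -> w O = j -> L_le A phi x one_fun w (c / 2))).
  { intros j. destruct (Compare_dec.le_lt_dec e0 j) as [h|h].
    - apply (ae_impl _ _ (He0 j h)). auto.
    - apply (ae_always Hprob). intros; lia. }
  apply (ae_impl _ _ (ae_and Hprob Hcompl _ _ Hae_c (ae_forall Hprob Hcompl _ Hbig))).
  intros x [Hexp HL] j HA. apply in_seq. split; [lia|].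
  destruct (Compare_dec.lt_dec j e0) as [h|h]; [lia|]. exfalso.
  destruct (mixing_admissible_from _ theta A (theta x) j Hmix) as [w [Hw He]].
  rewrite <- He in HA.
  pose proof (HL j ltac:(lia) w Hw He (S e)).
  pose proof (Hexp (Defs.cons_seq e w) (admissible_cons _ _ _ _ _ _ Hw HA) eq_refl).
  pose proof (L_partial_ge_term _ A phi x one_fun w e one_nonneg HA).
  unfold one_fun in *. lra.
Qed.

End Equivalences.

Theorem mainTheorem7 (X : Type) (M : (X -> Prop) -> Prop) (m : (X -> Prop) -> R)
  (theta : X -> X) (A : X -> nat -> nat -> bool) (alpha : R)
  (phi : X -> (nat -> nat) -> R) :
  probability_measure M m ->
  complete_measure M m ->
  invertible_mpt M m theta ->
  (forall i j : nat, M (fun x => A x i j = true)) ->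
  top_mixing theta A ->
  alpha > 0 ->
  summable_potential M m theta A alpha phi ->
  (bounded_access M m A <-> condition_A M m theta A phi) /\
  (finite_range M m A <-> condition_B M m theta A phi).
Proof.
  intros Hprob Hcompl _ _ Hmix _ Hphi.
  pose proof (summable_potential_exp_bounded_below _ _ _ _ _ _ _ Hphi) as Hbelow.
  pose proof (summable_potential_tail_sums_small _ _ _ _ _ _ _ Hphi) as Htail.
  split; split.
  - exact (bounded_access_condition_A _ _ _ _ _ _ Hprob Hcompl Hbelow).
  - exact (condition_A_bounded_access _ _ _ _ _ _ Hprob Hcompl Hmix Htail).
  - exact (finite_range_condition_B _ _ _ _ _ _ Hprob Hcompl Htail).
  - exact (condition_B_finite_range _ _ _ _ _ _ Hprob Hcompl Hmix Hbelow).
Qed.
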